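(* Let $\alpha_1,\ldots,\alpha_r>0$, $\beta\ge 0$ and $d>1$ be real numbers. For $1\le i\le r$ and $n\in\mathbb{N}=\{0,1,2,\ldots\}$ define intervals $I_{i,n}=[\alpha_i d^n-\beta,\ \alpha_i d^n+\beta]$, and let $I=\bigcup_{1\le i\le r}\bigcup_{n\in\mathbb{N}}I_{i,n}$. Then there are constants $C_1,C_2>0$, depending only on $\alpha_1,\ldots,\alpha_r,\beta,d$, such that for every $T\ge C_1$ the set $[0,T]\setminus I$ contains an interval of length at least $C_2T/\log(T)$. *)

From Stdlib Require Import Reals Lra List.
Open Scope R_scope.

Definition in_I (alphas : list R) (beta d x : R) : Prop :=
  exists a n, In a alphas /\ a * d ^ n - beta <= x /\ x <= a * d ^ n + beta.

(* For each i at most one point alpha_i d^n lies in the window [T/d, T), so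
   at most r of the intervals I_{i,n} have their centre there.  Cut
   [T/d, T] into r + 1 slots of width w separated by gaps of width 2 beta:
   an interval of length 2 beta meets at most one slot, so by pigeonhole
   some slot avoids I.  The slots fit as soon as (r + 1)(w + 2 beta) is at
   most (1 - 1/d) T, which holds for w = C2 T / ln T once T is large. *)
From Stdlib Require Import Reals List Lra Classical Arith Lia.
Open Scope R_scope.

Lemma functional_rel_image_short {A : Type} (H : A -> nat -> Prop) (l : list A) :
  (forall a, In a l -> forall j j', H a j -> H a j' -> j = j') ->
  exists L : list nat, (length L <= length l)%nat /\
    forall a j, In a l -> H a j -> In j L.
Proof.
  induction l as [|a l IH]; intros Hfun.
  - exists nil; split; simpl; [lia | tauto].
  - destruct IH as [L [HL HcovL]].
    { intros b Hb; apply Hfun; simpl; auto. }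
    destruct (classic (exists j, H a j)) as [[j0 Hj0] | Hnone].
    + exists (j0 :: L); split; simpl; [lia |].
      intros b j [<- | Hb] Hj.
      * left; exact (Hfun a (or_introl eq_refl) j0 j Hj0 Hj).
      * right; eauto.
    + exists L; split; simpl; [lia |].
      intros b j [<- | Hb] Hj; [exfalso; eauto | eauto].
Qed.

Lemma pigeonhole_functional_rel {A : Type} (H : A -> nat -> Prop) (l : list A) :
  (forall a, In a l -> forall j j', H a j -> H a j' -> j = j') ->
  exists j, (j <= length l)%nat /\ forall a, In a l -> ~ H a j.
Proof.
  intros Hfun.
  destruct (functional_rel_image_short H l Hfun) as [L [HL HcovL]].
  destruct (classic (exists j, In j (seq 0 (S (length l))) /\ ~ In j L))
    as [[j [Hj HjL]] | Hnone].
  - apply in_seq in Hj.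
    exists j; split; [lia |].
    intros a Ha Haj; apply HjL; eauto.
  - assert (Hincl : incl (seq 0 (S (length l))) L).
    { intros j Hj; apply NNPP; eauto. }
    apply NoDup_incl_length in Hincl; [| apply seq_NoDup].
    rewrite length_seq in Hincl; lia.
Qed.

Lemma power_in_window_unique (d a X : R) (p q : nat) :
  1 <= d -> 0 <= a ->
  X <= a * d ^ p < d * X -> X <= a * d ^ q < d * X -> p = q.
Proof.
  intros Hd Ha.
  assert (Hnext : forall m n, (m < n)%nat -> X <= a * d ^ m -> d * X <= a * d ^ n).
  { intros m n Hmn Hm.
    assert (Hpow : d ^ S m <= d ^ n) by (apply Rle_pow; [lra | lia]).
    simpl in Hpow.
    apply Rle_trans with (a * (d * d ^ m)); [nra |].
    apply Rmult_le_compat_l; lra. }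
  intros Hp Hq.
  destruct (lt_eq_lt_dec p q) as [[Hlt | Heq] | Hgt]; auto.
  - pose proof (Hnext p q Hlt (proj1 Hp)); lra.
  - pose proof (Hnext q p Hgt (proj1 Hq)); lra.
Qed.

Section Slots.

Variables (beta : R).
Hypothesis beta_ge0 : 0 <= beta.

Definition slot (s w : R) (j : nat) : R := s + INR j * (w + 2 * beta).

Lemma interval_meets_one_slot (s w c x x' : R) (j j' : nat) :
  slot s w j < x < slot s w j + w -> slot s w j' < x' < slot s w j' + w ->
  c - beta <= x <= c + beta -> c - beta <= x' <= c + beta -> j = j'.
Proof.
  assert (Hfar : forall x x' j j', (j < j')%nat ->
            slot s w j < x < slot s w j + w -> slot s w j' < x' < slot s w j' + w ->
            x' - x > 2 * beta).
  { intros y y' i i' Hii' Hy Hy'.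
    assert (Hstep : INR i + 1 <= INR i') by (rewrite <- S_INR; apply le_INR; lia).
    unfold slot in *; nra. }
  intros Hx Hx' Hcx Hcx'.
  destruct (lt_eq_lt_dec j j') as [[Hlt | Heq] | Hgt]; auto.
  - pose proof (Hfar x x' j j' Hlt Hx Hx'); lra.
  - pose proof (Hfar x' x j' j Hgt Hx' Hx); lra.
Qed.

End Slots.

Section Gap.

Variables (alphas : list R) (beta d : R).
Hypotheses (alphas_pos : forall a, In a alphas -> 0 < a)
  (beta_ge0 : 0 <= beta) (d_gt1 : 1 < d).

Lemma gap_in_window (X w : R) :
  (INR (length alphas) + 1) * (w + 2 * beta) <= (d - 1) * X ->
  exists s, forall x, s < x < s + w -> X <= x <= d * X /\ ~ in_I alphas beta d x.
Proof.
  intros Hroom.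
  set (hits := fun a j => exists n x, X <= a * d ^ n < d * X /\
         slot beta (X + beta) w j < x < slot beta (X + beta) w j + w /\
         a * d ^ n - beta <= x <= a * d ^ n + beta).
  assert (Hfun : forall a, In a alphas -> forall j j', hits a j -> hits a j' -> j = j').
  { intros a Ha j j' [n [x [Hn [Hx Hxn]]]] [n' [x' [Hn' [Hx' Hxn']]]].
    pose proof (alphas_pos a Ha).
    assert (n' = n) as ->
      by (apply (power_in_window_unique d a X); auto; lra).
    exact (interval_meets_one_slot beta beta_ge0 (X + beta) w _ x x' j j' Hx Hx' Hxn Hxn'). }
  destruct (pigeonhole_functional_rel hits alphas Hfun) as [j [Hjr Hfree]].
  exists (slot beta (X + beta) w j).
  intros x Hx.
  assert (Hw : 0 < w) by lra.
  assert (Hend : slot beta (X + beta) w j + w <= d * X - beta).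
  { assert (INR j * (w + 2 * beta) <= INR (length alphas) * (w + 2 * beta))
      by (apply Rmult_le_compat_r; [lra | apply le_INR; exact Hjr]).
    unfold slot in *; lra. }
  assert (Hstart : X + beta <= slot beta (X + beta) w j).
  { assert (0 <= INR j * (w + 2 * beta))
      by (apply Rmult_le_pos; [apply pos_INR | lra]).
    unfold slot; lra. }
  split; [lra |].
  intros [a [n [Ha Hxn]]].
  destruct (Rlt_le_dec (a * d ^ n) X); [lra |].
  destruct (Rlt_le_dec (a * d ^ n) (d * X)); [| lra].
  apply (Hfree a Ha); exists n, x; repeat split; lra.
Qed.

End Gap.

Lemma log_gap_fits (beta K e T : R) :
  0 <= beta -> 1 <= K -> 0 < e -> exp 1 + 4 * K * beta / e <= T ->
  K * (e / (2 * K) * T / ln T + 2 * beta) <= e * T.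
Proof.
  intros Hbeta HK He HT.
  assert (Hbeta_e : 0 <= 4 * K * beta / e)
    by (apply Rle_mult_inv_pos; nra).
  assert (HT0 : 0 < T) by (pose proof (exp_pos 1); lra).
  assert (Hln : 1 <= ln T).
  { rewrite <- (ln_exp 1).
    destruct (Req_dec (exp 1) T) as [<- | Hne]; [lra |].
    left; apply ln_increasing; [apply exp_pos | lra]. }
  assert (Hlog_term : K * (e / (2 * K) * T / ln T) <= e * T / 2).
  { replace (K * (e / (2 * K) * T / ln T)) with (e * T / 2 / ln T) by (field; lra).
    assert (Hinv : / ln T <= 1) by (rewrite <- Rinv_1; apply Rinv_le_contravar; lra).
    rewrite <- (Rmult_1_r (e * T / 2)) at 2.
    apply Rmult_le_compat_l; [nra | exact Hinv]. }
  assert (Hbeta_term : 2 * K * beta <= e * T / 2).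
  { apply Rmult_le_reg_r with (2 / e); [apply Rdiv_lt_0_compat; lra |].
    replace (e * T / 2 * (2 / e)) with T by (field; lra).
    replace (2 * K * beta * (2 / e)) with (4 * K * beta / e) by (field; lra).
    pose proof (exp_pos 1); lra. }
  lra.
Qed.

Theorem lemma4p3 (alphas : list R) (beta d : R) :
  (forall a, In a alphas -> 0 < a) -> 0 <= beta -> 1 < d ->
  exists C1 C2 : R, 0 < C1 /\ 0 < C2 /\
    forall T : R, C1 <= T ->
      exists a : R,
        forall x : R, a < x < a + C2 * T / ln T ->
          0 <= x <= T /\ ~ in_I alphas beta d x.
Proof.
  intros Hpos Hbeta Hd.
  set (K := INR (length alphas) + 1).
  set (e := (d - 1) / d).
  assert (HK : 1 <= K) by (pose proof (pos_INR (length alphas)); unfold K; lra).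
  assert (He : 0 < e) by (apply Rdiv_lt_0_compat; lra).
  assert (Hbeta_e : 0 <= 4 * K * beta / e) by (apply Rle_mult_inv_pos; nra).
  pose proof (exp_pos 1).
  exists (exp 1 + 4 * K * beta / e), (e / (2 * K)).
  split; [lra |].
  split; [apply Rdiv_lt_0_compat; lra |].
  intros T HT.
  destruct (gap_in_window alphas beta d Hpos Hbeta Hd (T / d) (e / (2 * K) * T / ln T))
    as [s Hs].
  { replace ((d - 1) * (T / d)) with (e * T) by (unfold e; field; lra).
    exact (log_gap_fits beta K e T Hbeta HK He HT). }
  exists s; intros x Hx.
  destruct (Hs x Hx) as [HxT HxI].
  replace (d * (T / d)) with T in HxT by (field; lra).
  assert (0 < T / d) by (apply Rdiv_lt_0_compat; lra).
  split; [lra | exact HxI].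
Qed.
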